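(* Let $(A,B,R)$ be a normalized formal context and $(X,Y)\in\mathcal{C}_N$. If $X^{\uparrow}\neq\varnothing$, then $X^{\uparrow\downarrow}=X$, i.e. $\langle X,X^{\uparrow}\rangle$ is a formal concept of $(A,B,R)$.
   Context: A formal context is a triple $(A,B,R)$ with $R\subseteq A\times B$. Derivation operators: $X^{\uparrow}=\{a\in A\mid (a,b)\in R \text{ for all } b\in X\}$ for $X\subseteq B$ and $Y^{\downarrow}=\{b\in B\mid (a,b)\in R \text{ for all } a\in Y\}$ for $Y\subseteq A$; a formal concept is a pair $\langle X,Y\rangle$ with $X^\uparrow=Y$, $Y^\downarrow=X$. Necessity operators: $X^{\uparrow_N}=\{a\in A\mid \text{for all } b\in B,\ (a,b)\in R\Rightarrow b\in X\}$ and $Y^{\downarrow^N}=\{b\in B\mid \text{for all } a\in A,\ (a,b)\in R\Rightarrow a\in Y\}$. $\mathcal{C}_N=\{(X,Y)\mid X\subseteq B,\ Y\subseteq A,\ X^{\uparrow_N}=Y,\ Y^{\downarrow^N}=X\}$. The context is normalized if for every $a\in A$ there are $b,b'\in B$ with $(a,b)\in R$, $(a,b')\notin R$, and for every $b\in B$ there are $a,a'\in A$ with $(a,b)\in R$, $(a',b)\notin R$. *)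

Section Contexts.
Context {A B : Type} (R : A -> B -> Prop).

Definition up (X : B -> Prop) : A -> Prop :=
  fun a => forall b, X b -> R a b.

Definition down (Y : A -> Prop) : B -> Prop :=
  fun b => forall a, Y a -> R a b.

Definition upN (X : B -> Prop) : A -> Prop :=
  fun a => forall b, R a b -> X b.

Definition downN (Y : A -> Prop) : B -> Prop :=
  fun b => forall a, R a b -> Y a.

Definition in_CN (X : B -> Prop) (Y : A -> Prop) : Prop :=
  upN X = Y /\ downN Y = X.

Definition formal_concept (X : B -> Prop) (Y : A -> Prop) : Prop :=
  up X = Y /\ down Y = X.

Definition normalized : Prop :=
  (forall a, exists b b', R a b /\ ~ R a b') /\
  (forall b, exists a a', R a b /\ ~ R a' b).

Definition nonempty {T : Type} (S : T -> Prop) : Prop := exists t, S t.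

End Contexts.

(* If [X] contains some [x], pick [a] in [X^up]; then [R a x], and [X = (X^upN)^downN]
   forces [a] into [X^upN], so every [b] in [X^up^down], being related to [a],
   lies in [X].  If [X] is empty, [X^up] is all of [A], and normalization leaves
   no attribute shared by every object, so [X^up^down] is empty as well. *)

From Stdlib Require Import Classical FunctionalExtensionality PropExtensionality.

Lemma pred_ext {T : Type} (P Q : T -> Prop) : (forall t, P t <-> Q t) -> P = Q.
Proof.
  intro PQ; apply functional_extensionality; intro t.
  apply propositional_extensionality; exact (PQ t).
Qed.

Section Derivations.
Context {A B : Type} (R : A -> B -> Prop).

Lemma down_up_ext (X : B -> Prop) (b : B) : X b -> down R (up R X) b.
Proof. intros Xb a upXa; exact (upXa b Xb). Qed.

Lemma upN_of_downN_upN (X : B -> Prop) (a : A) (x : B) :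
  downN R (upN R X) = X -> X x -> R a x -> upN R X a.
Proof. intros fixX Xx Rax; rewrite <- fixX in Xx; exact (Xx a Rax). Qed.

Lemma down_up_sub_inhabited (X : B -> Prop) (b : B) :
  downN R (upN R X) = X -> nonempty (up R X) -> nonempty X ->
  down R (up R X) b -> X b.
Proof.
  intros fixX [a upXa] [x Xx] downb.
  exact (upN_of_downN_upN X a x fixX Xx (upXa x Xx) b (downb a upXa)).
Qed.

Lemma down_up_empty (X : B -> Prop) (b : B) :
  (forall b', exists a', ~ R a' b') -> ~ nonempty X -> ~ down R (up R X) b.
Proof.
  intros noCommon emptyX downb.
  destruct (noCommon b) as [a' nRa'b].
  apply nRa'b, downb; intros x Xx.
  exfalso; exact (emptyX (ex_intro _ x Xx)).
Qed.

Lemma down_up_downN_fixed (X : B -> Prop) :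
  (forall b, exists a', ~ R a' b) ->
  downN R (upN R X) = X -> nonempty (up R X) -> down R (up R X) = X.
Proof.
  intros noCommon fixX upX.
  apply pred_ext; intro b; split; [|apply down_up_ext].
  intro downb.
  destruct (classic (nonempty X)) as [neX | emptyX].
  - exact (down_up_sub_inhabited X b fixX upX neX downb).
  - exfalso; exact (down_up_empty X b noCommon emptyX downb).
Qed.

End Derivations.

Theorem mainTheorem5 (A B : Type) (R : A -> B -> Prop)
  (X : B -> Prop) (Y : A -> Prop) :
  normalized R ->
  in_CN R X Y ->
  nonempty (up R X) ->
  down R (up R X) = X /\ formal_concept R X (up R X).
Proof.
  intros [_ normB] [upNX downNY] upX.
  assert (noCommon : forall b, exists a', ~ R a' b).
  { intro b; destruct (normB b) as [_ [a' [_ nRa'b]]]; now exists a'. }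
  assert (fixX : downN R (upN R X) = X) by (rewrite upNX; exact downNY).
  pose proof (down_up_downN_fixed R X noCommon fixX upX) as closed.
  repeat split; assumption.
Qed.
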